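(* Let $R$ be a ring, $\mathcal{L}$ a class of left $R$-modules, $M$ an exact complex which is $\mathrm{Hom}_R(-,\mathcal{L})$-exact, and $N$ a bounded above complex. If for every $n\in\mathbb{Z}$ every morphism $Z_{n-1}(M)\to N_n$ factors through a module in $\mathcal{L}$, then every morphism of complexes $M\to N$ is null-homotopic via a homotopy $s$ each of whose components $s_n$ factors through a module of $\mathcal{L}$.
   Context: Complexes are homologically indexed, $Z_n(M)=\mathrm{Ker}\,d_n^M$. A complex $N$ is bounded above if there is $b$ with $N_n=0$ for all $n\ge b$. A complex $X$ is $\mathrm{Hom}_R(-,\mathcal{L})$-exact if the complex of abelian groups $\mathrm{Hom}_R(X,L)$ is exact for every $L\in\mathcal{L}$. *)

From HB Require Import structures.
From mathcomp Require Import all_boot all_order all_algebra.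
Set Implicit Arguments. Unset Strict Implicit. Unset Printing Implicit Defensive.
Import GRing.Theory.
Local Open Scope ring_scope.

Section Kernel.
Variables (R : pzRingType) (U V : lmodType R) (f : {linear U -> V}).
Definition kerp : {pred U} := fun x => f x == 0.
Lemma kerp_submod : submod_closed kerp.
Proof.
split; first by rewrite unfold_in /kerp /= raddf0.
by move=> a x y; rewrite !unfold_in /kerp /= linearP => /eqP-> /eqP->; rewrite scaler0 addr0.
Qed.
HB.instance Definition _ := GRing.isSubmodClosed.Build R U kerp kerp_submod.
Definition kerT := {x : U | x \in kerp}.
HB.instance Definition _ := [isSub of kerT for (@sval U (fun x => x \in kerp))].
HB.instance Definition _ := [Choice of kerT by <:].
HB.instance Definition _ := [SubChoice_isSubLmodule of kerT by <:].
End Kernel.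

(* Chain complexes of left R-modules, homologically indexed by int.
   To avoid dependent-type casts (n-1+1 is not convertible to n), the
   differential d_{n+1} : X_{n+1} -> X_n is stored as [dif X n]. *)
Record complex (R : pzRingType) := Complex {
  obj :> int -> lmodType R;
  dif : forall n : int, {linear obj (n + 1) -> obj n};
  dif_dif : forall (n : int) (x : obj (n + 1 + 1)), dif n (dif (n + 1) x) = 0
}.

Section Complexes.
Variable R : pzRingType.

Definition factors_through (L : lmodType R -> Prop) (A B : lmodType R)
  (h : {linear A -> B}) : Prop :=
  exists (X : lmodType R), L X /\
  exists (a : {linear A -> X}) (b : {linear X -> B}), forall x, h x = b (a x).

Definition exact_complex (M : complex R) : Prop :=
  forall (n : int) (x : M (n + 1)), dif M n x = 0 ->
    exists y : M (n + 1 + 1), dif M (n + 1) y = x.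

(* Exactness of Hom_R(M, L) at Hom_R(M_{n+1}, L), for every L in the class. *)
Definition Hom_exact (L : lmodType R -> Prop) (M : complex R) : Prop :=
  forall (X : lmodType R), L X ->
  forall (n : int) (f : {linear M (n + 1) -> X}),
    (forall y : M (n + 1 + 1), f (dif M (n + 1) y) = 0) ->
    exists g : {linear M n -> X}, forall x : M (n + 1), f x = g (dif M n x).

Definition bounded_above (N : complex R) : Prop :=
  exists b : int, forall n : int, (b <= n)%R -> forall x : N n, x = 0.

(* Z_{n+1}(M) = Ker (d_{n+1} : M_{n+1} -> M_n). *)
Definition Zc (M : complex R) (n : int) : lmodType R := kerT (dif M n).

Definition is_chain_map (M N : complex R) (f : forall n, {linear M n -> N n}) :=
  forall (n : int) (x : M (n + 1)), f n (dif M n x) = dif N n (f (n + 1) x).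

Definition is_homotopy (M N : complex R) (f : forall n, {linear M n -> N n})
  (s : forall n, {linear M n -> N (n + 1)}) :=
  forall (n : int) (x : M (n + 1)),
    f (n + 1) x = dif N (n + 1) (s (n + 1) x) + s n (dif M n x).
End Complexes.

From HB Require Import structures.
From mathcomp Require Import all_boot all_order all_algebra zify.
From Stdlib Require Import ClassicalEpsilon.
Set Implicit Arguments. Unset Strict Implicit. Unset Printing Implicit Defensive.
Import Order.TTheory GRing.Theory Num.Theory.
Local Open Scope ring_scope.

(* The homotopy is built by downward induction, starting from [s = 0] above
   the bound of [N].  Suppose [s_n] satisfies [d s_n d = f d] on [M_(n+1)].
   Then [g = f_n - d s_n] vanishes on the boundaries of [M_n], so by exactness
   [g = h d_n] for some [h : Z_(n-1)(M) -> N_n].  Factor [h = beta alpha]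
   through [X] in [L]; since [alpha d_n] vanishes on boundaries,
   [Hom(-, X)]-exactness gives [c : M_(n-1) -> X] with [c d_n = alpha d_n].
   Then [s_(n-1) = beta c] satisfies [f_n = d s_n + s_(n-1) d], and
   [d s_(n-1) d = d g = f d] because [f] is a chain map, so the induction
   continues.  The infinitely many choices are made with Hilbert's epsilon. *)

Section DownwardChoice.
Variables (P : int -> Type) (Q : forall n, P n -> Prop).
Variable G : forall n, P (n + 1) -> P n -> Prop.
Variables (b : int) (z : forall n, P n).
Hypothesis base : forall n, b <= n -> Q (z n) /\ G (z (n + 1)) (z n).
Hypothesis step : forall n (t : P (n + 1)), Q t -> exists u : P n, Q u /\ G t u.

Definition choose_step n (t : P (n + 1)) : P n :=
  epsilon (inhabits (z n)) (fun u => Q t -> Q u /\ G t u).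

Lemma choose_stepP n (t : P (n + 1)) :
  Q t -> Q (choose_step t) /\ G t (choose_step t).
Proof.
move=> Qt; apply: (epsilon_spec _ (fun u => Q t -> Q u /\ G t u)) => //.
by have [u Qu] := step Qt; exists u.
Qed.

Fixpoint descend (m : nat) (n : int) : P n :=
  if m is m'.+1 then choose_step (descend m' (n + 1)) else z n.

Definition descent (n : int) : P n := if n <= b then descend (absz (b - n)) n else z n.

Lemma descend_inv m n : b <= n + m%:Z -> Q (descend m n).
Proof.
elim: m n => [|m IHm] n le_b_nm /=.
  by apply: (base _).1; rewrite addr0 in le_b_nm.
by apply: (choose_stepP _).1; apply: IHm; lia.
Qed.

Lemma descent_inv n : Q (descent n).
Proof.
rewrite /descent; case: ifP => [le_nb|/negbT]; first by apply: descend_inv; lia.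
by rewrite -ltNge => /ltW /base[].
Qed.

Lemma descent_step n : n < b -> descent n = choose_step (descent (n + 1)).
Proof.
move=> lt_nb; rewrite /descent (ltW lt_nb) ifT; last by lia.
by have -> : absz (b - n)%R = (absz (b - (n + 1))%R).+1 by lia.
Qed.

Lemma descent_ge n : b <= n -> descent n = z n.
Proof.
rewrite /descent; case: ifP => // le_nb le_bn.
by have -> : absz (b - n)%R = 0%N by lia.
Qed.

Lemma downward_choice :
  exists s : forall n, P n, forall n, Q (s n) /\ G (s (n + 1)) (s n).
Proof.
exists descent => n; split; first exact: descent_inv.
have [lt_nb|le_bn] := ltP n b.
  by rewrite (descent_step lt_nb); apply: (choose_stepP _).2; apply: descent_inv.
rewrite !descent_ge //; first exact: (base le_bn).2.
by rewrite (le_trans le_bn) ?lerDl.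
Qed.
End DownwardChoice.

Section Cycles.
Variables (R : pzRingType) (M : complex R) (k : int).

Lemma dif_in_cycles (x : M (k + 1 + 1)) : dif M (k + 1) x \in kerp (dif M k).
Proof. by rewrite unfold_in /kerp /= dif_dif. Qed.

Definition difZ (x : M (k + 1 + 1)) : Zc M k := Sub (dif M (k + 1) x) (dif_in_cycles x).

Lemma difZ_is_linear : linear difZ.
Proof. by move=> a x y; apply: val_inj; rewrite /= !linearP. Qed.

HB.instance Definition _ :=
  GRing.isLinear.Build R (M (k + 1 + 1)) (Zc M k) _ difZ difZ_is_linear.

Lemma difZ_dif (y : M (k + 1 + 1 + 1)) : difZ (dif M (k + 1 + 1) y) = 0.
Proof. by apply: val_inj; rewrite /= dif_dif. Qed.

Hypothesis exM : exact_complex M.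

Lemma cycle_is_boundary (z : Zc M k) : exists y, dif M (k + 1) y == val z.
Proof. by have [y <-] := exM (eqP (valP z)); exists y. Qed.

Variables (V : lmodType R) (g : {linear M (k + 1 + 1) -> V}).
Hypothesis g_boundary : forall y, g (dif M (k + 1 + 1) y) = 0.

Lemma eq_on_dif_fibres x1 x2 : dif M (k + 1) x1 = dif M (k + 1) x2 -> g x1 = g x2.
Proof.
move=> e; have /exM[y dy] : dif M (k + 1) (x1 - x2) = 0 by rewrite linearB e subrr.
by apply/eqP; rewrite -subr_eq0 -linearB -dy g_boundary.
Qed.

Definition on_cycles (z : Zc M k) : V := g (xchoose (cycle_is_boundary z)).

Lemma on_cyclesE x : g x = on_cycles (difZ x).
Proof. by apply: eq_on_dif_fibres; rewrite (eqP (xchooseP (cycle_is_boundary _))). Qed.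

Lemma on_cycles_is_linear : linear on_cycles.
Proof.
move=> a z1 z2; rewrite /on_cycles -linearP; apply: eq_on_dif_fibres.
by rewrite !linearP !(eqP (xchooseP (cycle_is_boundary _))).
Qed.

HB.instance Definition _ :=
  GRing.isLinear.Build R (Zc M k) V _ on_cycles on_cycles_is_linear.

Lemma factor_through_difZ : exists h : {linear Zc M k -> V}, forall x, g x = h (difZ x).
Proof. by exists on_cycles; apply: on_cyclesE. Qed.

End Cycles.

Lemma factors_through_null (R : pzRingType) (L : lmodType R -> Prop)
    (X A B : lmodType R) :
  L X -> factors_through L (\0 : {linear A -> B}).
Proof. by move=> LX; exists X; split=> //; exists \0, \0. Qed.

Section NullHomotopy.
Variables (R : pzRingType) (L : lmodType R -> Prop) (M N : complex R).
Hypotheses (exM : exact_complex M) (hexM : Hom_exact L M).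

Lemma factors_through_dif k (V : lmodType R) (g : {linear M (k + 1 + 1) -> V}) :
  (forall h : {linear Zc M k -> V}, factors_through L h) ->
  (forall y, g (dif M (k + 1 + 1) y) = 0) ->
  exists u : {linear M (k + 1) -> V},
    factors_through L u /\ forall x, g x = u (dif M (k + 1) x).
Proof.
move=> facL g_boundary.
have [h gh] := factor_through_difZ exM g_boundary.
have [X [LX [a [b hab]]]] := facL h.
have aZ_boundary (y : M (k + 1 + 1 + 1)) : (a \o @difZ R M k) (dif M (k + 1 + 1) y) = 0.
  by rewrite /= difZ_dif linear0.
have [c hc] := @hexM X LX (k + 1) _ aZ_boundary.
exists (b \o c); split; first by exists X; split=> //; exists c, b.
by move=> x; rewrite gh hab /= -hc.
Qed.

Variable f : forall n, {linear M n -> N n}.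
Hypothesis f_chain : is_chain_map f.

Definition boundary_homotopy n (t : {linear M n -> N (n + 1)}) :=
  forall y : M (n + 1), dif N n (t (dif M n y)) = f n (dif M n y).

Definition homotopy_step n
    (t : {linear M (n + 1) -> N (n + 1 + 1)}) (u : {linear M n -> N (n + 1)}) :=
  forall x : M (n + 1), f (n + 1) x = dif N (n + 1) (t x) + u (dif M n x).

Hypothesis facL :
  forall (n : int) (h : {linear Zc M n -> N (n + 1 + 1)}), factors_through L h.

Lemma extend_homotopy n (t : {linear M (n + 1) -> N (n + 1 + 1)}) :
  boundary_homotopy t ->
  exists u : {linear M n -> N (n + 1)},
    boundary_homotopy u /\ factors_through L u /\ homotopy_step t u.
Proof.
(* [Zc M k] lives in [M (k + 1)], so [n] has to be a syntactic successor. *)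
have [k En] : exists k, n = k + 1 by exists (n - 1); rewrite subrK.
subst n => t_bd.
have g_boundary (y : M (k + 1 + 1 + 1)) :
    (f (k + 1 + 1) \- (dif N (k + 1 + 1) \o t)) (dif M (k + 1 + 1) y) = 0.
  by rewrite /= t_bd subrr.
have [u [Lu gu]] := factors_through_dif (@facL k) g_boundary.
exists u; split; last by split=> // x; rewrite -gu /= subrKC.
by move=> y; rewrite -gu /= linearB dif_dif subr0 f_chain.
Qed.

End NullHomotopy.

Theorem lemma2p1 (R : pzRingType) (L : lmodType R -> Prop) (M N : complex R) :
  exact_complex M -> Hom_exact L M -> bounded_above N ->
  (forall (n : int) (h : {linear Zc M n -> N (n + 1 + 1)}),
     factors_through L h) ->
  forall f : forall n, {linear M n -> N n}, is_chain_map f ->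
  exists s : forall n, {linear M n -> N (n + 1)},
    is_homotopy f s /\ forall n, factors_through L (s n).
Proof.
move=> exM hexM [b N0] facL f f_chain.
have [X [LX _]] := facL 0 \0.
pose z n : {linear M n -> N (n + 1)} := \0.
have base n : b <= n ->
    boundary_homotopy f (z n) /\ factors_through L (z n) /\
    homotopy_step f (z (n + 1)) (z n).
  move=> le_bn; have le_bn1 : b <= n + 1 by rewrite (le_trans le_bn) ?lerDl.
  split; last split; first by move=> y; rewrite (N0 _ le_bn (f n _)) [LHS](N0 _ le_bn).
    exact: factors_through_null LX.
  by move=> x; rewrite (N0 _ le_bn1 (f _ x)) [RHS](N0 _ le_bn1).
have [s hs] := downward_choice base (extend_homotopy exM hexM f_chain facL).
by exists s; split=> n; have [_ []] := hs n.
Qed.
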